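(* Let $X=[0,1[$ and let $\widehat{\operatorname{PC}^{\bowtie}}$ be the group of all bijections $X\to X$ that are continuous outside a finite subset of $X$. Let ${\mathfrak S}_{\mathrm{fin}}\subset \widehat{\operatorname{PC}^{\bowtie}}$ be the subgroup of finitely supported permutations of $X$ and $\varepsilon_{\mathrm{fin}}:{\mathfrak S}_{\mathrm{fin}}\to \mathbb{Z}/2\mathbb{Z}$ the classical signature. Then there exists a group homomorphism $\varepsilon:\widehat{\operatorname{PC}^{\bowtie}}\to \mathbb{Z}/2\mathbb{Z}$ whose restriction to ${\mathfrak S}_{\mathrm{fin}}$ equals $\varepsilon_{\mathrm{fin}}$.
   Context: A permutation of $X$ is finitely supported if it moves only finitely many points. The classical signature of a finitely supported permutation is its sign, written additively in $\mathbb{Z}/2\mathbb{Z}$. *)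

From Stdlib Require Import Reals List.
Import ListNotations.
Open Scope R_scope.

Definition X : Type := {x : R | 0 <= x < 1}.
Definition xval (x : X) : R := proj1_sig x.

Definition continuous_at_X (f : X -> X) (x : X) : Prop :=
  forall eps : R, 0 < eps -> exists delta : R, 0 < delta /\
    forall y : X, Rabs (xval y - xval x) < delta ->
      Rabs (xval (f y) - xval (f x)) < eps.

Definition bijection (f : X -> X) : Prop :=
  exists g : X -> X, (forall x, g (f x) = x) /\ (forall y, f (g y) = y).

Definition PC_hat (f : X -> X) : Prop :=
  bijection f /\ exists F : list X, forall x : X, ~ In x F -> continuous_at_X f x.

Definition fin_supp_perm (f : X -> X) : Prop :=
  bijection f /\ exists s : list X, forall x : X, f x <> x -> In x s.

Definition is_inversion (f : X -> X) (p : X * X) : bool :=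
  if Rlt_dec (xval (fst p)) (xval (snd p)) then
    if Rlt_dec (xval (f (snd p))) (xval (f (fst p))) then true else false
  else false.

Definition inversions (f : X -> X) (s : list X) : nat :=
  length (filter (is_inversion f) (list_prod s s)).

(* Classical signature (in Z/2Z = bool with xorb): parity of the number of
   inversions of f restricted to its (finite) support. *)
Definition fin_signature (f : X -> X) (b : bool) : Prop :=
  exists s : list X, NoDup s /\ (forall x : X, f x <> x <-> In x s) /\
    b = Nat.odd (inversions f s).

From Stdlib Require Import Reals List Permutation Classical ClassicalEpsilon ProofIrrelevance FinFun Lia Lra Btauto.
Import ListNotations.
Open Scope R_scope.
Open Scope bool_scope.

(* The signature of a piecewise continuous bijection [f] is the parity of the number of
   inversions of [f] on a finite sample [S] adapted to a cut set [Z] of [f] (a finite set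
   containing 0 and the discontinuities of [f]): [Z] is contained in [S] and every gap of
   [X \ Z] contains 3 points of [S] modulo 4.
   On each gap [f] is continuous and injective, hence monotone, and distinct gaps have
   disjoint interval images, so whether [f] inverts a pair only depends on the cells (gaps
   and points of [Z]) of its two points. Since [n] and [n(n-1)/2] are both odd when
   [n = 3 mod 4], counting inverted pairs modulo 4 cell by cell shows that the parity does
   not depend on [S]. As [3 + 1 + 3 = 3 mod 4], a sample adapted to [Z] plus one of its
   points is adapted to [Z], so the parity does not depend on [Z] either.
   For a composite [f o g], the bijection [g] maps the gaps of a cut set onto gaps, so it
   transports a sample adapted to [g] and [f o g] to one adapted to [f]; and [f o g]
   inverts a pair iff exactly one of [g] (on the pair) and [f] (on its image) does. For a
   finitely supported permutation, points outside the support are fixed and do not change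
   the parity. *)

Definition asbool (P : Prop) : bool := if excluded_middle_informative P then true else false.

Lemma asbool_true (P : Prop) : asbool P = true <-> P.
Proof. unfold asbool; destruct excluded_middle_informative; split; congruence || tauto. Qed.

Lemma asbool_false (P : Prop) : asbool P = false <-> ~ P.
Proof. unfold asbool; destruct excluded_middle_informative; split; congruence || tauto. Qed.

Lemma asbool_iff (P Q : Prop) : (P <-> Q) -> asbool P = asbool Q.
Proof. intros H; apply Bool.eq_iff_eq_true; rewrite !asbool_true; exact H. Qed.

Lemma b2n_asbool_partition3 (P Q1 Q2 Q3 : Prop) : (P <-> Q1 \/ Q2 \/ Q3) ->
  ~ (Q1 /\ Q2) -> ~ (Q1 /\ Q3) -> ~ (Q2 /\ Q3) ->
  Nat.b2n (asbool P) = (Nat.b2n (asbool Q1) + Nat.b2n (asbool Q2) + Nat.b2n (asbool Q3))%nat.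
Proof. unfold asbool; repeat destruct excluded_middle_informative; simpl; tauto. Qed.

Lemma left_inverse_injective {A B} (f : A -> B) (g : B -> A) : (forall x, g (f x) = x) -> Injective f.
Proof. intros H x y E. rewrite <- (H x), <- (H y), E. reflexivity. Qed.

Section Counting.
Context {A : Type}.
Implicit Types (p q : A -> bool) (l m : list A).

Definition count p l : nat := length (filter p l).

Lemma count_cons p a l : count p (a :: l) = (Nat.b2n (p a) + count p l)%nat.
Proof. unfold count; simpl; destruct (p a); reflexivity. Qed.

Lemma count_app p l m : count p (l ++ m) = (count p l + count p m)%nat.
Proof. unfold count; rewrite filter_app, length_app; reflexivity. Qed.

Lemma count_ext_in p q l : (forall x, In x l -> p x = q x) -> count p l = count q l.
Proof. intros H; unfold count; f_equal; apply filter_ext_in; exact H. Qed.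

Lemma count_perm p l m : Permutation l m -> count p l = count p m.
Proof. induction 1; auto; rewrite ?count_cons; lia. Qed.

Lemma count_split p q l :
  count p l = (count (fun x => p x && q x) l + count (fun x => p x && negb (q x)) l)%nat.
Proof. induction l as [|a l IH]; [reflexivity|]. rewrite !count_cons, IH. destruct (p a), (q a); simpl; lia. Qed.

Lemma count_sum3 p q1 q2 q3 l :
  (forall x, In x l -> Nat.b2n (p x) = (Nat.b2n (q1 x) + Nat.b2n (q2 x) + Nat.b2n (q3 x))%nat) ->
  count p l = (count q1 l + count q2 l + count q3 l)%nat.
Proof.
  induction l as [|a l IH]; intros H; [reflexivity|]. rewrite !count_cons, IH.
  - rewrite H by (left; reflexivity). lia.
  - intros x Hx; apply H; right; exact Hx.
Qed.

Lemma count_false p l : (forall x, In x l -> p x = false) -> count p l = 0%nat.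
Proof. intros H; unfold count; rewrite (filter_ext_in _ (fun _ => false)), filter_false by exact H; reflexivity. Qed.

Lemma count_true p l : (forall x, In x l -> p x = true) -> count p l = length l.
Proof. intros H; unfold count; rewrite (filter_ext_in _ (fun _ => true)), filter_true by exact H; reflexivity. Qed.

Lemma count_pos p l : (0 < count p l)%nat -> exists x, In x l /\ p x = true.
Proof.
  intros H. destruct (filter p l) as [|x s] eqn:E; [unfold count in H; rewrite E in H; simpl in H; lia|].
  exists x. apply filter_In. rewrite E; left; reflexivity.
Qed.

Lemma count_eq_one (a : A) l : NoDup l -> In a l -> count (fun x => asbool (x = a)) l = 1%nat.
Proof.
  induction l as [|b l IH]; intros Hl Ha; [destruct Ha|]. apply NoDup_cons_iff in Hl as [Hb Hl].
  rewrite count_cons. destruct Ha as [<-|Ha].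
  - rewrite (proj2 (asbool_true _) eq_refl), count_false; [reflexivity|].
    intros y Hy; apply asbool_false; intros ->; contradiction.
  - rewrite (proj2 (asbool_false _)), IH by (auto || (intros ->; contradiction)). reflexivity.
Qed.

Lemma count_neq_one (a : A) l : NoDup l -> In a l ->
  count (fun x => negb (asbool (x = a))) l = (length l - 1)%nat.
Proof.
  intros Hl Ha. rewrite <- (count_true (fun _ => true) l) by reflexivity.
  rewrite (count_split (fun _ => true) (fun x => asbool (x = a))). simpl andb.
  rewrite count_eq_one by assumption. lia.
Qed.

Definition count2 (P : A -> A -> bool) l m : nat := list_sum (map (fun x => count (P x) m) l).

Implicit Types (P Q : A -> A -> bool).

Lemma count2_cons_l P a l m : count2 P (a :: l) m = (count (P a) m + count2 P l m)%nat.
Proof. reflexivity. Qed.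

Lemma count2_cons_r P l a m : count2 P l (a :: m) = (count (fun x => P x a) l + count2 P l m)%nat.
Proof. induction l as [|b l IH]; [reflexivity|]. rewrite !count2_cons_l, !count_cons, IH. lia. Qed.

Lemma count2_ext_in P Q l m :
  (forall x y, In x l -> In y m -> P x y = Q x y) -> count2 P l m = count2 Q l m.
Proof.
  intros H; unfold count2; f_equal; apply map_ext_in; intros x Hx.
  apply count_ext_in; intros y Hy; apply H; assumption.
Qed.

Lemma count2_split P Q l m :
  count2 P l m = (count2 (fun x y => P x y && Q x y) l m + count2 (fun x y => P x y && negb (Q x y)) l m)%nat.
Proof. induction l as [|a l IH]; [reflexivity|]. rewrite !count2_cons_l, IH, (count_split _ (Q a)). lia. Qed.

Lemma count2_swap P l m : count2 P l m = count2 (fun y x => P x y) m l.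
Proof.
  induction m as [|a m IH]; [induction l; [reflexivity|exact IHl]|].
  rewrite count2_cons_r, count2_cons_l, IH; reflexivity.
Qed.

Lemma count2_perm P l l' m m' : Permutation l l' -> Permutation m m' -> count2 P l m = count2 P l' m'.
Proof.
  intros Hl Hm. unfold count2. rewrite (Permutation_list_sum (Permutation_map _ Hl)).
  f_equal; apply map_ext; intros x; apply count_perm, Hm.
Qed.

Lemma count2_app_l P l l' m : count2 P (l ++ l') m = (count2 P l m + count2 P l' m)%nat.
Proof. unfold count2; rewrite map_app, list_sum_app; reflexivity. Qed.

Lemma count2_app_r P l m m' : count2 P l (m ++ m') = (count2 P l m + count2 P l m')%nat.
Proof. rewrite !(count2_swap P l). apply count2_app_l. Qed.

Lemma count2_xorb P Q l m :
  (count2 (fun x y => xorb (P x y) (Q x y)) l m + 2 * count2 (fun x y => P x y && Q x y) l m =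
   count2 P l m + count2 Q l m)%nat.
Proof.
  induction l as [|a l IH]; [reflexivity|]. rewrite !count2_cons_l.
  enough (count (fun y => xorb (P a y) (Q a y)) m + 2 * count (fun y => P a y && Q a y) m =
          count (P a) m + count (Q a) m)%nat by lia.
  clear IH. induction m as [|b m IH]; [reflexivity|]. rewrite !count_cons.
  destruct (P a b), (Q a b); simpl; lia.
Qed.

Lemma count2_xorb_odd P Q l m :
  Nat.odd (count2 (fun x y => xorb (P x y) (Q x y)) l m) = xorb (Nat.odd (count2 P l m)) (Nat.odd (count2 Q l m)).
Proof. rewrite <- Nat.odd_add, <- count2_xorb, Nat.odd_add_mul_2. reflexivity. Qed.

Lemma count2_const_l P l m c : (forall x, In x l -> count (P x) m = c) -> count2 P l m = (length l * c)%nat.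
Proof.
  induction l as [|a l IH]; intros H; [reflexivity|].
  rewrite count2_cons_l, IH, H; [simpl; lia|left; reflexivity|].
  intros x Hx; apply H; right; exact Hx.
Qed.

Lemma count2_list_prod P l m : length (filter (fun xy => P (fst xy) (snd xy)) (list_prod l m)) = count2 P l m.
Proof.
  induction l as [|a l IH]; [reflexivity|]. simpl. rewrite filter_app, length_app, IH, count2_cons_l.
  f_equal. clear IH. induction m as [|b m IH]; [reflexivity|]. simpl; rewrite count_cons, <- IH.
  destruct (P a b); reflexivity.
Qed.

End Counting.

Lemma count_map {A B} (p : B -> bool) (h : A -> B) l : count p (map h l) = count (fun x => p (h x)) l.
Proof. induction l as [|a l IH]; [reflexivity|]. simpl map; rewrite !count_cons, IH; reflexivity. Qed.

Lemma count2_map {A B} (P : B -> B -> bool) (h : A -> B) l m :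
  count2 P (map h l) (map h m) = count2 (fun x y => P (h x) (h y)) l m.
Proof. unfold count2; rewrite map_map; f_equal; apply map_ext; intros x; apply count_map. Qed.

Lemma in_map_injective {A B} (g : A -> B) (l : list A) x : Injective g -> (In (g x) (map g l) <-> In x l).
Proof.
  intros Hg; split; [|apply in_map]. intros H. apply in_map_iff in H as [z [E Hz]].
  rewrite <- (Hg _ _ E); exact Hz.
Qed.

Lemma Permutation_extract {A} (R l : list A) : NoDup l -> NoDup R -> incl R l ->
  Permutation l (R ++ filter (fun y => negb (asbool (In y R))) l).
Proof.
  intros Hl HR HRl. apply NoDup_Permutation; [exact Hl| |].
  - apply NoDup_app; [exact HR|apply NoDup_filter, Hl|].
    intros a Ha Ha'. apply filter_In in Ha' as [_ Ha']. rewrite (proj2 (asbool_true _) Ha) in Ha'. discriminate.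
  - intros y. rewrite in_app_iff, filter_In, Bool.negb_true_iff, asbool_false. split; [|intros [|[]]; auto].
    intros Hy. destruct (classic (In y R)); [left|right]; auto.
Qed.

Lemma matching_of_class_counts {A} (e : A -> A -> bool) (e_refl : forall x, e x x = true)
  (e_sym : forall x y, e x y = e y x) (e_trans : forall x y z, e x y = true -> e y z = true -> e x z = true) :
  forall S S', NoDup S -> NoDup S' -> (forall x, count (e x) S = count (e x) S') ->
  exists phi, Permutation (map phi S) S' /\ forall x, In x S -> e x (phi x) = true.
Proof.
  induction S as [|a S IH]; intros S' HS HS' Hc.
  - exists (fun x => x). destruct S' as [|b S']; [split; [constructor|intros ? []]|].
    specialize (Hc b). rewrite count_cons, e_refl in Hc. discriminate Hc.
  - apply NoDup_cons_iff in HS as [Ha HS].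
    assert (Hp : (0 < count (e a) S')%nat) by (rewrite <- Hc, count_cons, e_refl; simpl; lia).
    destruct (count_pos _ _ Hp) as [a' [Ha' Eaa']].
    destruct (in_split _ _ Ha') as [l1 [l2 ->]].
    destruct (IH (l1 ++ l2)) as [phi [Hp1 Hp2]]; [exact HS|eapply NoDup_remove_1; eauto|..].
    { intros x. specialize (Hc x). rewrite count_cons, !count_app, count_cons in Hc. rewrite count_app.
      assert (e x a = e x a') as E.
      { destruct (e x a) eqn:E1, (e x a') eqn:E2; auto.
        - assert (e x a' = true) by (apply (e_trans x a a'); auto). congruence.
        - assert (e x a = true) by (apply (e_trans x a' a); auto; rewrite e_sym; auto). congruence. }
      rewrite E in Hc. lia. }
    exists (fun y => if excluded_middle_informative (y = a) then a' else phi y). split.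
    + simpl. destruct excluded_middle_informative; [|congruence].
      rewrite (map_ext_in _ phi) by (intros y Hy; destruct excluded_middle_informative; [subst; contradiction|reflexivity]).
      apply Permutation_trans with (a' :: (l1 ++ l2)); [apply perm_skip, Hp1|apply Permutation_middle].
    + intros x [<-|Hx]; destruct excluded_middle_informative; [assumption|congruence|subst; contradiction|auto].
Qed.


Lemma count_flat_map {A B} (p : B -> bool) (F : A -> list B) l :
  count p (flat_map F l) = list_sum (map (fun z => count p (F z)) l).
Proof. induction l as [|a l IH]; [reflexivity|]. simpl. rewrite count_app, IH. reflexivity. Qed.

Lemma list_sum_single {A} (h : A -> nat) l a : NoDup l -> In a l ->
  (forall z, In z l -> z <> a -> h z = 0%nat) -> list_sum (map h l) = h a.
Proof.
  induction l as [|b l IH]; intros Hl Ha H; [destruct Ha|]. apply NoDup_cons_iff in Hl as [Hb Hl]. simpl.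
  destruct Ha as [<-|Ha].
  - enough (list_sum (map h l) = 0%nat) by lia.
    assert (H0 : forall z, In z l -> h z = 0%nat) by (intros z Hz; apply H; [right|intros ->]; auto).
    clear -H0. induction l as [|c l IH]; [reflexivity|]. simpl.
    rewrite H0, IH; [reflexivity| |left; reflexivity]. intros z Hz; apply H0; right; exact Hz.
  - rewrite H, IH; auto; [intros z Hz; apply H; right; exact Hz|left; reflexivity|intros ->; contradiction].
Qed.

Lemma NoDup_flat_map {A B} (F : A -> list B) l : NoDup l -> (forall z, In z l -> NoDup (F z)) ->
  (forall z z' t, In z l -> In z' l -> In t (F z) -> In t (F z') -> z = z') -> NoDup (flat_map F l).
Proof.
  induction l as [|a l IH]; intros Hl H1 H2; simpl; [constructor|]. apply NoDup_cons_iff in Hl as [Ha Hl].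
  apply NoDup_app.
  - apply H1; left; reflexivity.
  - apply IH; auto; [intros; apply H1; right; auto|intros; eapply H2; eauto; right; auto].
  - intros t Ht Ht'. apply in_flat_map in Ht' as [z [Hz Hzt]].
    assert (a = z) as <- by (eapply H2; eauto; [left|right]; auto). contradiction.
Qed.

Lemma mod4_add_three a b : (a mod 4 = 3 -> b mod 4 = 3 -> (a + 1 + b) mod 4 = 3)%nat.
Proof.
  intros Ha Hb. rewrite (Nat.div_mod_eq a 4), (Nat.div_mod_eq b 4), Ha, Hb.
  replace (4 * (a / 4) + 3 + 1 + (4 * (b / 4) + 3))%nat with (3 + (a / 4 + b / 4 + 1) * 4)%nat by lia.
  apply Nat.Div0.mod_add.
Qed.

Lemma odd_of_double_mod4 a b : ((2 * a) mod 4 = (2 * b) mod 4 -> Nat.odd a = Nat.odd b)%nat.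
Proof.
  intros H. rewrite (Nat.div2_odd a), (Nat.div2_odd b) in H.
  replace (2 * (2 * Nat.div2 a + Nat.b2n (Nat.odd a)))%nat with (2 * Nat.b2n (Nat.odd a) + Nat.div2 a * 4)%nat in H by lia.
  replace (2 * (2 * Nat.div2 b + Nat.b2n (Nat.odd b)))%nat with (2 * Nat.b2n (Nat.odd b) + Nat.div2 b * 4)%nat in H by lia.
  rewrite !Nat.Div0.mod_add in H. destruct (Nat.odd a), (Nat.odd b); simpl in H; congruence.
Qed.

Lemma xval_inj (x y : X) : xval x = xval y -> x = y.
Proof. destruct x, y; simpl; intros ->; f_equal; apply proof_irrelevance. Qed.

Lemma xval_neq (x y : X) : x <> y -> xval x <> xval y.
Proof. intros H E; apply H, xval_inj, E. Qed.

Lemma xval_range (x : X) : 0 <= xval x < 1.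
Proof. exact (proj2_sig x). Qed.

Definition X_eq_dec (x y : X) : {x = y} + {x <> y} := excluded_middle_informative (x = y).

Definition mkX (t : R) (H : 0 <= t < 1) : X := exist (fun s => 0 <= s < 1) t H.

Definition X0 : X := mkX 0 (conj (Rle_refl 0) Rlt_0_1).

Lemma xval_pos (x : X) : x <> X0 -> 0 < xval x.
Proof.
  intros Hx. destruct (xval_range x). destruct (Req_dec (xval x) 0) as [E|]; [|lra].
  exfalso; apply Hx, xval_inj, E.
Qed.

Lemma injective_xval_neq (f : X -> X) x y : Injective f -> xval x <> xval y -> xval (f x) <> xval (f y).
Proof. intros Hf H E. apply H. rewrite (Hf _ _ (xval_inj _ _ E)). reflexivity. Qed.

Lemma pos_dist_to_list (l : list X) (x : X) : ~ In x l ->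
  exists eta, 0 < eta /\ forall z, In z l -> eta <= Rabs (xval z - xval x).
Proof.
  induction l as [|a l IH]; intros Hx.
  - exists 1; split; [lra|]; intros z [].
  - destruct IH as [e [He H]]; [intros Hin; apply Hx; right; exact Hin|].
    assert (Ha : xval a <> xval x) by (apply xval_neq; intros ->; apply Hx; left; reflexivity).
    exists (Rmin e (Rabs (xval a - xval x))). split.
    + apply Rmin_pos; [exact He|]. apply Rabs_pos_lt; lra.
    + intros z [<-|Hz]; [apply Rmin_r|]. eapply Rle_trans; [apply Rmin_l|]; auto.
Qed.

Definition between (a b t : R) : Prop := a <= t <= b \/ b <= t <= a.

Definition ltX (x y : X) : bool := if Rlt_dec (xval x) (xval y) then true else false.

Lemma ltX_true x y : ltX x y = true <-> xval x < xval y.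
Proof. unfold ltX; destruct Rlt_dec; split; congruence || tauto. Qed.

Lemma ltX_irrefl x : ltX x x = false.
Proof. unfold ltX; destruct Rlt_dec; [lra|reflexivity]. Qed.

Lemma ltX_asym x y : xval x <> xval y -> ltX x y = negb (ltX y x).
Proof. intros H; unfold ltX; destruct Rlt_dec, Rlt_dec; simpl; auto; lra. Qed.

Definition inverted (f : X -> X) (x y : X) : bool := ltX x y && ltX (f y) (f x).

Lemma inversions_count2 f S : inversions f S = count2 (inverted f) S S.
Proof.
  unfold inversions. rewrite <- count2_list_prod. f_equal. apply filter_ext.
  intros [a b]; unfold is_inversion, inverted, ltX; simpl. destruct Rlt_dec, Rlt_dec; reflexivity.
Qed.

Definition inverted_pair (f : X -> X) (x y : X) : bool := inverted f x y || inverted f y x.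

Lemma inverted_pair_sym f x y : inverted_pair f x y = inverted_pair f y x.
Proof. apply Bool.orb_comm. Qed.

Lemma inverted_pair_irrefl f x : inverted_pair f x x = false.
Proof. unfold inverted_pair, inverted; rewrite ltX_irrefl; reflexivity. Qed.

Lemma inverted_pair_iff f x y : Injective f -> xval x <> xval y ->
  inverted_pair f x y = true <-> ~ (xval x < xval y <-> xval (f x) < xval (f y)).
Proof.
  intros Hf N. pose proof (injective_xval_neq f x y Hf N) as NF.
  unfold inverted_pair, inverted. rewrite Bool.orb_true_iff, !Bool.andb_true_iff, !ltX_true.
  destruct (Rlt_dec (xval x) (xval y)), (Rlt_dec (xval (f x)) (xval (f y)));
    split; intros H; try (exfalso; apply H; split; intros; lra); try (destruct H as [[]|[]]; lra);
    [left|right]; lra.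
Qed.

Lemma count2_inverted_pair f S : count2 (inverted_pair f) S S = (2 * inversions f S)%nat.
Proof.
  assert (Hxor : forall x y, inverted f x y && inverted f y x = false).
  { intros x y; unfold inverted.
    destruct (ltX x y) eqn:E1, (ltX y x) eqn:E2; simpl; btauto || (apply ltX_true in E1, E2; lra). }
  rewrite inversions_count2, (count2_split _ (inverted f)).
  rewrite (count2_ext_in _ (inverted f)) by
    (intros x y _ _; unfold inverted_pair; destruct (inverted f x y), (inverted f y x); reflexivity).
  rewrite (count2_ext_in (fun x y => _ && negb _) (fun x y => inverted f y x)) by
    (intros x y _ _; unfold inverted_pair; specialize (Hxor x y);
     destruct (inverted f x y), (inverted f y x); simpl in *; congruence).
  rewrite <- count2_swap. lia.
Qed.

(** * Gaps of a finite subset *)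

(* [gap Z x y]: [y] lies in the connected component of [X \ Z] containing [x]
   (when [x] is in [Z]: in the component just below [x]). *)
Definition gap (Z : list X) (x y : X) : Prop :=
  ~ In y Z /\ forall z, In z Z -> (xval z < xval x <-> xval z < xval y).

Section Gap.
Variable Z : list X.

Lemma gap_refl x : ~ In x Z -> gap Z x x.
Proof. split; tauto. Qed.

Lemma gap_notin x y : gap Z x y -> ~ In y Z.
Proof. intros [H _]; exact H. Qed.

Lemma gap_sym x y : ~ In x Z -> gap Z x y -> gap Z y x.
Proof. intros Hx [Hy H]; split; [exact Hx|]. intros z Hz; rewrite H by exact Hz; tauto. Qed.

Lemma gap_trans x y w : gap Z x y -> gap Z y w -> gap Z x w.
Proof. intros [_ H1] [Hw H2]; split; [exact Hw|]. intros z Hz; rewrite H1, H2 by exact Hz; tauto. Qed.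

Lemma gap_common p u v : gap Z p u -> gap Z p v -> gap Z u v.
Proof. intros [_ H1] [Hv H2]; split; [exact Hv|]. intros z Hz; rewrite <- H1, H2 by exact Hz; tauto. Qed.

Lemma gap_between p u v w : gap Z p u -> gap Z p v -> between (xval u) (xval v) (xval w) -> gap Z p w.
Proof.
  intros [Hu Hzu] [Hv Hzv] Hw. split.
  - intros Hin. specialize (Hzu w Hin); specialize (Hzv w Hin).
    destruct (Rlt_dec (xval w) (xval p)).
    + assert (xval w < xval u) by tauto; assert (xval w < xval v) by tauto. destruct Hw; lra.
    + assert (~ xval w < xval u) by tauto; assert (~ xval w < xval v) by tauto.
      assert (E : xval w = xval u \/ xval w = xval v) by (destruct Hw; lra).
      destruct E as [E|E]; apply xval_inj in E; subst; contradiction.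
  - intros z Hz. specialize (Hzu z Hz); specialize (Hzv z Hz).
    destruct (Rlt_dec (xval z) (xval p)).
    + assert (xval z < xval u) by tauto; assert (xval z < xval v) by tauto.
      split; [intros; destruct Hw; lra|tauto].
    + assert (~ xval z < xval u) by tauto; assert (~ xval z < xval v) by tauto.
      split; [tauto|intros; destruct Hw; lra].
Qed.

Lemma gap_open x : ~ In x Z -> exists eta, 0 < eta /\ forall y, Rabs (xval y - xval x) < eta -> gap Z x y.
Proof.
  intros Hx. destruct (pos_dist_to_list Z x Hx) as [eta [Heta H]].
  exists eta; split; [exact Heta|]. intros y Hy. split.
  - intros Hin. specialize (H y Hin). lra.
  - intros z Hz. specialize (H z Hz). revert H Hy.
    unfold Rabs; repeat destruct Rcase_abs; intros; split; intros; lra.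
Qed.

Lemma gap_interval (lo hi : R) (p : X) :
  lo < xval p < hi -> (forall z, In z Z -> xval z <= lo \/ hi <= xval z) ->
  (exists z, In z Z /\ xval z = lo) -> (hi = 1 \/ exists z, In z Z /\ xval z = hi) ->
  forall y, gap Z p y <-> lo < xval y < hi.
Proof.
  intros Hp HZ [zl [Hzl Ezl]] Hhi y. pose proof (xval_range y). split.
  - intros [Hy Hc]. split.
    + assert (xval zl < xval p) as Hl by lra. apply Hc in Hl; [lra|exact Hzl].
    + destruct Hhi as [E|[zh [Hzh Ezh]]]; [lra|].
      assert (~ xval zh < xval y) by (rewrite <- (Hc zh Hzh); lra).
      destruct (Req_dec (xval y) hi) as [E|]; [|lra].
      assert (zh = y) as <- by (apply xval_inj; lra). contradiction.
  - intros Hy. split.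
    + intros Hin. destruct (HZ y Hin); lra.
    + intros z Hz. destruct (HZ z Hz); split; intros; lra.
Qed.

End Gap.

Lemma gap_same_elements (A B : list X) x y : (forall z, In z A <-> In z B) -> (gap A x y <-> gap B x y).
Proof.
  intros H; unfold gap. split; intros [H1 H2]; split;
    try (rewrite <- H || rewrite H); auto; intros z Hz; apply H2, H, Hz.
Qed.

Lemma gap_cons w Z x y :
  gap (w :: Z) x y <-> w <> y /\ gap Z x y /\ (xval w < xval x <-> xval w < xval y).
Proof.
  unfold gap; simpl. split.
  - intros [Hy H]. repeat split; auto; intros; apply H; auto.
  - intros [Hw [[Hy H] Hwxy]]. split; [intros [E|E]; contradiction|].
    intros z [<-|Hz]; auto.
Qed.

Definition cell (Z : list X) (x y : X) : Prop := x = y \/ (~ In x Z /\ gap Z x y).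

Lemma cell_refl Z x : cell Z x x.
Proof. left; reflexivity. Qed.

Lemma cell_sym Z x y : cell Z x y -> cell Z y x.
Proof.
  intros [->|[Hx H]]; [left; reflexivity|right].
  split; [exact (gap_notin _ _ _ H)|apply gap_sym; assumption].
Qed.

Lemma cell_trans Z x y w : cell Z x y -> cell Z y w -> cell Z x w.
Proof.
  intros [->|[Hx H1]] H; [exact H|]. destruct H as [<-|[_ H2]]; right; [auto|].
  split; [exact Hx|apply (gap_trans _ _ _ _ H1 H2)].
Qed.

Lemma cell_gap Z x y : ~ In x Z -> (cell Z x y <-> gap Z x y).
Proof. intros Hx; split; [intros [<-|[_ H]]; [apply gap_refl|]; assumption|intros; right; auto]. Qed.

(** * Piecewise continuous maps *)

(* [0] belongs to a cut set so that every gap has its lower end in it. *)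
Definition cut_set (f : X -> X) (Z : list X) : Prop :=
  In X0 Z /\ forall x, ~ In x Z -> continuous_at_X f x.

Lemma clamp_range (a b : X) t : 0 <= Rmax (xval a) (Rmin (xval b) t) < 1.
Proof. pose proof (xval_range a); pose proof (xval_range b). unfold Rmax, Rmin; repeat destruct Rle_dec; lra. Qed.

Definition clamp (a b : X) (t : R) : X := mkX _ (clamp_range a b t).

Lemma IVT_X (f : X -> X) (a b : X) (c : R) : xval a <= xval b ->
  (forall w, xval a <= xval w <= xval b -> continuous_at_X f w) ->
  between (xval (f a)) (xval (f b)) c ->
  exists w, xval a <= xval w <= xval b /\ xval (f w) = c.
Proof.
  intros Hab Hc Hcv.
  set (F := fun t => xval (f (clamp a b t)) - c).
  assert (HF : continuity F).
  { intros t eps Heps.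
    destruct (Hc (clamp a b t) ltac:(simpl; unfold Rmax, Rmin; repeat destruct Rle_dec; lra) eps Heps)
      as [d [Hd H]].
    exists d; split; [exact Hd|]. intros t' [_ Ht']. simpl in Ht' |- *; unfold R_dist in Ht' |- *.
    unfold F. replace (xval (f (clamp a b t')) - c - (xval (f (clamp a b t)) - c))
      with (xval (f (clamp a b t')) - xval (f (clamp a b t))) by ring.
    apply H. eapply Rle_lt_trans; [|exact Ht'].
    simpl; unfold Rmax, Rmin; repeat destruct Rle_dec; unfold Rabs; repeat destruct Rcase_abs; lra. }
  assert (Hend : forall e, xval e = xval a \/ xval e = xval b -> F (xval e) = xval (f e) - c).
  { intros e He; unfold F; do 3 f_equal; apply xval_inj; simpl.
    unfold Rmax, Rmin; repeat destruct Rle_dec; lra. }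
  destruct (IVT_cor F (xval a) (xval b) HF Hab) as [t [Ht Ft]].
  - rewrite !Hend by auto. destruct Hcv; nra.
  - exists (clamp a b t). split; [simpl; unfold Rmax, Rmin; repeat destruct Rle_dec; lra|].
    unfold F in Ft; lra.
Qed.

Section Monotone.
Variables (f : X -> X) (W : list X).
Hypothesis f_inj : Injective f.
Hypothesis W_cut : cut_set f W.

Lemma gap_IVT p u v c : gap W p u -> gap W p v -> between (xval (f u)) (xval (f v)) c ->
  exists w, gap W p w /\ between (xval u) (xval v) (xval w) /\ xval (f w) = c.
Proof.
  intros Hu Hv Hc.
  assert (Hcont : forall w, between (xval u) (xval v) (xval w) -> continuous_at_X f w).
  { intros w Hw. apply (proj2 W_cut), (gap_notin W p), (gap_between W p u v w Hu Hv Hw). }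
  destruct (Rle_dec (xval u) (xval v)).
  - destruct (IVT_X f u v c) as [w [Hw Hfw]]; [lra|intros; apply Hcont; left; auto|exact Hc|].
    exists w. assert (between (xval u) (xval v) (xval w)) by (left; exact Hw).
    split; [apply (gap_between W p u v w)|split]; auto.
  - destruct (IVT_X f v u c) as [w [Hw Hfw]]; [lra|intros; apply Hcont; right; auto|destruct Hc; [right|left]; auto|].
    exists w. assert (between (xval u) (xval v) (xval w)) by (right; exact Hw).
    split; [apply (gap_between W p u v w)|split]; auto.
Qed.

Lemma gap_preimage_between p u v t : gap W p u -> gap W p v ->
  between (xval (f u)) (xval (f v)) (xval (f t)) -> gap W p t /\ between (xval u) (xval v) (xval t).
Proof.
  intros Hu Hv Hc. destruct (gap_IVT p u v (xval (f t))) as [w [Hw [Hw2 Hfw]]]; auto.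
  rewrite <- (f_inj _ _ (xval_inj _ _ Hfw)). auto.
Qed.

Lemma gap_monotone3 p a b c : gap W p a -> gap W p b -> gap W p c ->
  xval a < xval b < xval c ->
  (xval (f a) < xval (f b) < xval (f c)) \/ (xval (f c) < xval (f b) < xval (f a)).
Proof.
  intros Ha Hb Hc Habc.
  assert (Nab := injective_xval_neq f a b f_inj ltac:(lra)).
  assert (Nbc := injective_xval_neq f b c f_inj ltac:(lra)).
  assert (Nac := injective_xval_neq f a c f_inj ltac:(lra)).
  (* otherwise [f b] is not between [f a] and [f c], and the value in the middle of the three
     is attained between the other two preimages *)
  destruct (Rlt_dec (xval (f a)) (xval (f b))), (Rlt_dec (xval (f b)) (xval (f c))),
    (Rlt_dec (xval (f a)) (xval (f c))); try (left; lra); try (right; lra).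
  1, 4: destruct (gap_preimage_between p a b c) as [_ H]; auto; unfold between in *; lra.
  all: destruct (gap_preimage_between p b c a) as [_ H]; auto; unfold between in *; lra.
Qed.

Lemma gap_monotone_widen p u v m M : gap W p u -> gap W p v -> gap W p m -> gap W p M ->
  xval m <= xval u -> xval u < xval v -> xval v <= xval M ->
  (xval (f u) < xval (f v) <-> xval (f m) < xval (f M)).
Proof.
  intros Hu Hv Hm HM H1 H2 H3.
  assert (E1 : xval (f u) < xval (f v) <-> xval (f m) < xval (f v)).
  { destruct (Req_dec (xval m) (xval u)) as [E|E]; [apply xval_inj in E as ->; tauto|].
    destruct (gap_monotone3 p m u v) as [H'|H']; auto; lra. }
  rewrite E1.
  destruct (Req_dec (xval v) (xval M)) as [E|E]; [apply xval_inj in E as ->; tauto|].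
  destruct (gap_monotone3 p m v M) as [H'|H']; auto; lra.
Qed.

Lemma gap_monotone p x y x' y' : gap W p x -> gap W p y -> gap W p x' -> gap W p y' ->
  xval x < xval y -> xval x' < xval y' ->
  (xval (f x) < xval (f y) <-> xval (f x') < xval (f y')).
Proof.
  intros Hx Hy Hx' Hy' H H'.
  assert (Hm : exists m, gap W p m /\ xval m <= xval x /\ xval m <= xval x').
  { destruct (Rle_dec (xval x) (xval x')); [exists x|exists x']; (split; [assumption|split; lra]). }
  assert (HM : exists M, gap W p M /\ xval y <= xval M /\ xval y' <= xval M).
  { destruct (Rle_dec (xval y) (xval y')); [exists y'|exists y]; (split; [assumption|split; lra]). }
  destruct Hm as [m [Hm [Hmx Hmx']]], HM as [M [HM [HyM Hy'M]]].
  rewrite (gap_monotone_widen p x y m M), (gap_monotone_widen p x' y' m M); auto; tauto.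
Qed.

Lemma gap_order_outside p u u' v : gap W p u -> gap W p u' -> ~ gap W p v ->
  (xval u < xval v <-> xval u' < xval v) /\ (xval (f u) < xval (f v) <-> xval (f u') < xval (f v)).
Proof.
  intros Hu Hu' Hv.
  assert (Nu : xval u <> xval v) by (intro E; apply xval_inj in E as <-; contradiction).
  assert (Nu' : xval u' <> xval v) by (intro E; apply xval_inj in E as <-; contradiction).
  assert (Fu := injective_xval_neq f u v f_inj Nu). assert (Fu' := injective_xval_neq f u' v f_inj Nu').
  split; split; intros H.
  - destruct (Rlt_dec (xval u') (xval v)); auto; exfalso; apply Hv.
    apply (gap_between W p u u' v); auto; unfold between; lra.
  - destruct (Rlt_dec (xval u) (xval v)); auto; exfalso; apply Hv.
    apply (gap_between W p u u' v); auto; unfold between; lra.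
  - destruct (Rlt_dec (xval (f u')) (xval (f v))); auto; exfalso; apply Hv.
    apply (gap_preimage_between p u u' v); auto; unfold between; lra.
  - destruct (Rlt_dec (xval (f u)) (xval (f v))); auto; exfalso; apply Hv.
    apply (gap_preimage_between p u u' v); auto; unfold between; lra.
Qed.

Lemma inverted_pair_cell x y x' y' : cell W x x' -> cell W y y' ->
  xval x <> xval y -> xval x' <> xval y' -> inverted_pair f x y = inverted_pair f x' y'.
Proof.
  intros Sx Sy N N'. apply Bool.eq_iff_eq_true. rewrite !inverted_pair_iff by assumption.
  pose proof (injective_xval_neq f x y f_inj N) as NF. pose proof (injective_xval_neq f x' y' f_inj N') as NF'.
  destruct (classic (cell W x y)) as [S|NS].
  - destruct S as [E|[Hx Hxy]]; [subst; lra|].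
    assert (Hxx' : gap W x x') by (apply cell_gap; assumption).
    assert (Hxy' : gap W x y') by (eapply gap_trans; [exact Hxy|]; apply cell_gap; [exact (gap_notin _ _ _ Hxy)|exact Sy]).
    assert (Hxx := gap_refl W x Hx).
    destruct (Rlt_dec (xval x) (xval y)), (Rlt_dec (xval x') (xval y')).
    + pose proof (gap_monotone x x y x' y'); intuition lra.
    + pose proof (gap_monotone x x y y' x'); intuition lra.
    + pose proof (gap_monotone x y x x' y'); intuition lra.
    + pose proof (gap_monotone x y x y' x'); intuition lra.
  - (* across two different cells, only the relative position of the cells matters *)
    assert (NS' : ~ cell W x' y) by (intro C; apply NS; eapply cell_trans; eauto).
    assert (Nx'y : xval x' <> xval y) by (intro E; apply xval_inj in E as ->; apply NS', cell_refl).
    pose proof (injective_xval_neq f x' y f_inj Nx'y) as NF2.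
    assert (A : (xval x < xval y <-> xval x' < xval y) /\ (xval (f x) < xval (f y) <-> xval (f x') < xval (f y))).
    { destruct Sx as [<-|[Hx Hxx']]; [tauto|].
      apply (gap_order_outside x); auto; [apply gap_refl; auto|intro C; apply NS; right; auto]. }
    assert (B : (xval y < xval x' <-> xval y' < xval x') /\ (xval (f y) < xval (f x') <-> xval (f y') < xval (f x'))).
    { destruct Sy as [<-|[Hy Hyy']]; [tauto|].
      apply (gap_order_outside y); auto; [apply gap_refl; auto|intro C; apply NS', cell_sym; right; auto]. }
    intuition lra.
Qed.

End Monotone.

Lemma points_around (w : X) (e : R) : 0 < e -> w <> X0 ->
  exists a b : X, xval a < xval w < xval b /\ Rabs (xval a - xval w) < e /\ Rabs (xval b - xval w) < e.
Proof.
  intros He Hw. pose proof (xval_pos w Hw). pose proof (xval_range w).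
  assert (Ra : 0 <= xval w - Rmin e (xval w) / 2 < 1) by (unfold Rmin; destruct Rle_dec; lra).
  assert (Rb : 0 <= xval w + Rmin e (1 - xval w) / 2 < 1) by (unfold Rmin; destruct Rle_dec; lra).
  exists (mkX _ Ra), (mkX _ Rb); simpl.
  unfold Rmin; repeat destruct Rle_dec; unfold Rabs; repeat destruct Rcase_abs; lra.
Qed.

Definition locally_constant_at (P : X -> Prop) (t : X) : Prop :=
  exists d, 0 < d /\ forall u, Rabs (xval u - xval t) < d -> (P u <-> P t).

Lemma segment_connected (P : X -> Prop) (a b : X) : xval a <= xval b ->
  (forall t, xval a <= xval t <= xval b -> locally_constant_at P t) -> P a -> P b.
Proof.
  intros Hab Hloc Pa.
  set (E := fun s => xval a <= s <= xval b /\ forall u : X, xval a <= xval u <= s -> P u).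
  assert (Ea : E (xval a)).
  { split; [lra|]. intros u Hu. replace u with a by (apply xval_inj; lra). exact Pa. }
  destruct (completeness E) as [s [Hub Hlub]]; [exists (xval b); intros t Ht; apply Ht|eauto|].
  assert (Has : xval a <= s) by (apply Hub, Ea).
  assert (Hsb : s <= xval b) by (apply Hlub; intros t Ht; apply Ht).
  assert (Rs : 0 <= s < 1) by (pose proof (xval_range a); pose proof (xval_range b); lra).
  set (sX := mkX s Rs).
  assert (Below : forall u : X, xval a <= xval u < s -> P u).
  { intros u Hu. apply NNPP; intros Nu. assert (s <= xval u); [|lra]. apply Hlub. intros t [Ht Pt].
    destruct (Rle_dec t (xval u)) as [|Hlt]; [assumption|]. exfalso; apply Nu, Pt; lra. }
  destruct (Hloc sX ltac:(simpl; lra)) as [d [Hd Hsd]].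
  assert (PsX : P sX).
  { destruct (Req_dec s (xval a)) as [E0|E0].
    - replace sX with a by (apply xval_inj; simpl; lra). exact Pa.
    - apply (Hsd (clamp a sX (s - d / 2))).
      + simpl; unfold Rmax, Rmin; repeat destruct Rle_dec; unfold Rabs; repeat destruct Rcase_abs; lra.
      + apply Below; simpl; unfold Rmax, Rmin; repeat destruct Rle_dec; lra. }
  (* the property propagates a little beyond the supremum [s], so [s] must be [b] *)
  assert (Hall : forall u : X, xval a <= xval u <= Rmin (xval b) (s + d / 2) -> P u).
  { intros u Hu. destruct (Rlt_dec (xval u) s); [apply Below; lra|].
    apply Hsd; [|exact PsX]. simpl; revert Hu; unfold Rmin; destruct Rle_dec; unfold Rabs; destruct Rcase_abs; lra. }
  assert (Emin : E (Rmin (xval b) (s + d / 2))) by (split; [unfold Rmin; destruct Rle_dec; lra|exact Hall]).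
  apply Hub in Emin. apply Hall. revert Emin; unfold Rmin; destruct Rle_dec; lra.
Qed.

Lemma segment_locally_constant (P : X -> Prop) (a b : X) :
  (forall t, between (xval a) (xval b) (xval t) -> locally_constant_at P t) -> (P a <-> P b).
Proof.
  intros Hloc.
  assert (Hneg : forall t, between (xval a) (xval b) (xval t) -> locally_constant_at (fun u => ~ P u) t).
  { intros t Ht. destruct (Hloc t Ht) as [d [Hd H]].
    exists d; split; [exact Hd|]. intros u Hu; rewrite (H u Hu); tauto. }
  destruct (Rle_dec (xval a) (xval b)) as [Hab|Hba]; split; intros H.
  - apply (segment_connected P a b Hab); [intros t Ht; apply Hloc; left; exact Ht|exact H].
  - apply NNPP; intros N.
    exact (segment_connected (fun u => ~ P u) a b Hab (fun t Ht => Hneg t (or_introl Ht)) N H).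
  - apply NNPP; intros N.
    exact (segment_connected (fun u => ~ P u) b a ltac:(lra) (fun t Ht => Hneg t (or_intror Ht)) N H).
  - apply (segment_connected P b a ltac:(lra)); [intros t Ht; apply Hloc; right; exact Ht|exact H].
Qed.

Section GapImage.
Variables (g gi : X -> X) (Z : list X).
Hypothesis gi_g : forall x, gi (g x) = x.
Hypothesis g_gi : forall y, g (gi y) = y.
Hypothesis Z_cut : cut_set g Z.

Let g_inj : Injective g := left_inverse_injective g gi gi_g.

Lemma gap_image_nbhd w : ~ In w Z -> exists d, 0 < d /\
  forall u : X, Rabs (xval u - xval (g w)) < d -> exists v, gap Z w v /\ g v = u.
Proof.
  intros Hw. destruct (gap_open Z w Hw) as [e [He Ho]].
  assert (Hw0 : w <> X0) by (intros ->; apply Hw, (proj1 Z_cut)).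
  destruct (points_around w e He Hw0) as [a [b [Hab [Ha Hb]]]].
  apply Ho in Ha, Hb.
  destruct (gap_monotone3 g Z g_inj Z_cut w a w b) as [H|H]; auto; [apply gap_refl; auto| |].
  1: exists (Rmin (xval (g w) - xval (g a)) (xval (g b) - xval (g w))).
  2: exists (Rmin (xval (g a) - xval (g w)) (xval (g w) - xval (g b))).
  all: split; [apply Rmin_pos; lra|]; intros u Hu.
  all: destruct (gap_IVT g Z Z_cut w a b (xval u)) as [v [Hv [_ Hgv]]]; auto;
    [revert Hu; unfold between, Rmin; destruct Rle_dec; unfold Rabs; destruct Rcase_abs; lra|
     exists v; split; [exact Hv|apply xval_inj, Hgv]].
Qed.

Lemma gap_map_fwd x y : ~ In x Z -> gap Z x y -> gap (map g Z) (g x) (g y).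
Proof.
  intros Hx Hxy. assert (Hy := gap_notin _ _ _ Hxy). split.
  - rewrite in_map_injective by exact g_inj. exact Hy.
  - intros z' Hz'. apply in_map_iff in Hz' as [z [<- Hz]].
    assert (Nzx : xval (g z) <> xval (g x)).
    { apply (injective_xval_neq g z x g_inj), xval_neq. intros ->; contradiction. }
    assert (Nzy : xval (g z) <> xval (g y)).
    { apply (injective_xval_neq g z y g_inj), xval_neq. intros ->; contradiction. }
    (* [g z] cannot lie between [g x] and [g y], as its preimage would be in the gap of [x] *)
    assert (NB : ~ between (xval (g x)) (xval (g y)) (xval (g z))).
    { intro HB. destruct (gap_preimage_between g Z g_inj Z_cut x x y z) as [C _]; auto.
      - apply gap_refl; exact Hx.
      - exact (gap_notin _ _ _ C Hz). }
    unfold between in NB. split; intros H.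
    + destruct (Rlt_dec (xval (g z)) (xval (g y))); auto; lra.
    + destruct (Rlt_dec (xval (g z)) (xval (g x))); auto; lra.
Qed.

Lemma gap_preimage_locally_constant x t : ~ In x Z -> ~ In t (map g Z) ->
  locally_constant_at (fun u => gap Z x (gi u)) t.
Proof.
  intros Hx Ht.
  assert (Hw : ~ In (gi t) Z) by (rewrite <- (in_map_injective g Z _ g_inj), g_gi; exact Ht).
  destruct (gap_image_nbhd (gi t) Hw) as [d [Hd H]]. rewrite g_gi in H.
  exists d; split; [exact Hd|]. intros u Hu. destruct (H u Hu) as [v [Hv <-]]. rewrite gi_g.
  split; intros C; eapply gap_trans; eauto. apply gap_sym; assumption.
Qed.

Lemma gap_map x y : ~ In x Z -> (gap Z x y <-> gap (map g Z) (g x) (g y)).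
Proof.
  intros Hx. split; [apply gap_map_fwd; exact Hx|]. intros Hc.
  rewrite <- (gi_g y). apply (segment_locally_constant (fun u => gap Z x (gi u)) (g x)).
  - intros t Ht. apply gap_preimage_locally_constant; [exact Hx|].
    apply (gap_notin (map g Z) (g x)), (gap_between _ _ (g x) (g y)); auto.
    apply gap_refl. rewrite in_map_injective by exact g_inj. exact Hx.
  - rewrite gi_g. apply gap_refl; exact Hx.
Qed.

End GapImage.

Definition gap_count (Z : list X) (x : X) (S : list X) : nat := count (fun y => asbool (gap Z x y)) S.

Lemma gap_count_same_elements A B x S : (forall z, In z A <-> In z B) -> gap_count A x S = gap_count B x S.
Proof. intros H. apply count_ext_in; intros y _. apply asbool_iff, gap_same_elements, H. Qed.

Lemma gap_cons_in_gap Z w x xi y : ~ In x Z -> gap Z x w -> gap Z w xi ->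
  (gap (w :: Z) xi y <-> gap Z x y /\ w <> y /\ (xval w < xval xi <-> xval w < xval y)).
Proof.
  intros Hx Hxw Hwxi. rewrite gap_cons.
  assert (gap Z x xi) by (eapply gap_trans; eauto).
  split; intros [Hwy [Hg Hs]]; (split; [|split]); auto.
  - apply (gap_trans Z x xi y); assumption.
  - apply (gap_trans Z xi x y); [apply gap_sym|]; assumption.
Qed.

Lemma gap_cons_outside_gap Z w x y : ~ In x Z -> ~ gap Z x w -> (gap (w :: Z) x y <-> gap Z x y).
Proof.
  intros Hx Nxw. rewrite gap_cons. split; [tauto|].
  intros Hy. split; [intros ->; contradiction|split; [exact Hy|]].
  destruct (Rlt_dec (xval w) (xval x)), (Rlt_dec (xval w) (xval y)); try tauto; exfalso; apply Nxw;
    apply (gap_between Z x x y); auto using gap_refl; unfold between; lra.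
Qed.

(* The cut point [w] splits one gap into two gaps and [w], and [3 + 1 + 3 = 3] modulo 4. *)
Lemma gap_count_mod4_remove_point (Z S : list X) (w : X) : In X0 Z -> NoDup S -> In w S ->
  (forall x, ~ In x (w :: Z) -> (gap_count (w :: Z) x S mod 4 = 3)%nat) ->
  forall x, ~ In x Z -> (gap_count Z x S mod 4 = 3)%nat.
Proof.
  intros H0 HS HwS H x Hx.
  destruct (classic (In w Z)) as [Hw|Hw].
  { rewrite (gap_count_same_elements Z (w :: Z)); [apply H; intros [<-|]; auto|].
    intros z; simpl; split; [auto|intros [<-|]; auto]. }
  destruct (classic (gap Z x w)) as [Cxw|Nxw].
  2: { assert (Hxw : x <> w) by (intros ->; apply Nxw, gap_refl; exact Hw).
       replace (gap_count Z x S) with (gap_count (w :: Z) x S); [apply H; intros [E|E]; auto|].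
       apply count_ext_in; intros y _. apply asbool_iff, gap_cons_outside_gap; assumption. }
  destruct (gap_open Z w Hw) as [e [He Ho]].
  assert (Hw0 : w <> X0) by (intros ->; contradiction).
  destruct (points_around w e He Hw0) as [x1 [x2 [H12 [H1 H2]]]]. apply Ho in H1, H2.
  unfold gap_count; rewrite (count_sum3 _ (fun y => asbool (gap (w :: Z) x1 y)) (fun y => asbool (y = w))
    (fun y => asbool (gap (w :: Z) x2 y))).
  { rewrite count_eq_one by assumption.
    apply mod4_add_three; apply H; intros [E|E]; subst; lra || exact (gap_notin _ _ _ H1 E) || exact (gap_notin _ _ _ H2 E). }
  intros y _. apply b2n_asbool_partition3; rewrite !(gap_cons_in_gap Z w x) by assumption.
  - split; [|intros [[? _]|[->|[? _]]]; assumption].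
    intros Hy. destruct (X_eq_dec y w) as [->|Nyw]; [tauto|].
    pose proof (xval_neq _ _ Nyw).
    destruct (Rlt_dec (xval y) (xval w)); [left|right; right]; (split; [assumption|split; [congruence|lra]]).
  - intros [[_ [Hwy _]] E]; congruence.
  - intros [[_ [_ ?]] [_ [_ ?]]]; lra.
  - intros [E [_ [Hwy _]]]; congruence.
Qed.

Lemma gap_count_mod4_coarsen (Z0 Z S : list X) : In X0 Z0 -> incl Z0 Z -> NoDup S -> incl Z S ->
  (forall x, ~ In x Z -> (gap_count Z x S mod 4 = 3)%nat) ->
  forall x, ~ In x Z0 -> (gap_count Z0 x S mod 4 = 3)%nat.
Proof.
  intros H0 HZ0 HS HZS HZ.
  assert (Hind : forall L, incl L S ->
    (forall x, ~ In x (L ++ Z0) -> (gap_count (L ++ Z0) x S mod 4 = 3)%nat) ->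
    forall x, ~ In x Z0 -> (gap_count Z0 x S mod 4 = 3)%nat).
  { induction L as [|w L IH]; intros HL HLZ; [exact HLZ|].
    apply IH; [intros y Hy; apply HL; right; exact Hy|].
    apply (gap_count_mod4_remove_point _ S w); auto; [apply in_or_app; right; exact H0|apply HL; left; reflexivity]. }
  assert (E : forall z, In z (Z ++ Z0) <-> In z Z) by (intros z; rewrite in_app_iff; intuition).
  apply (Hind Z HZS). intros x Hx. rewrite (gap_count_same_elements _ Z) by exact E.
  apply HZ. rewrite <- E; exact Hx.
Qed.

Definition adapted_to (Z S : list X) : Prop :=
  NoDup S /\ incl Z S /\ forall x, ~ In x Z -> (gap_count Z x S mod 4 = 3)%nat.

Definition next_cut (Z : list X) (r : R) : R :=
  fold_right (fun z m => if Rlt_dec r (xval z) then Rmin (xval z) m else m) 1 Z.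

Lemma next_cut_spec (Z : list X) (z : X) :
  xval z < next_cut Z (xval z) <= 1 /\
  (forall z', In z' Z -> xval z < xval z' -> next_cut Z (xval z) <= xval z') /\
  (next_cut Z (xval z) = 1 \/ exists z', In z' Z /\ xval z' = next_cut Z (xval z)).
Proof.
  pose proof (xval_range z). induction Z as [|a Z IH]; simpl.
  - split; [lra|]. split; [intros _ []|left; reflexivity].
  - destruct IH as [[H1 H2] [H3 H4]]. destruct Rlt_dec as [Ha|Ha].
    + split; [unfold Rmin; destruct Rle_dec; lra|]. split.
      * intros z' [<-|Hz'] Hlt; [apply Rmin_l|]. eapply Rle_trans; [apply Rmin_r|]. auto.
      * unfold Rmin; destruct Rle_dec; [right; exists a; split; [left|]; reflexivity|].
        destruct H4 as [E|[z' [Hz' E]]]; [left; exact E|right; exists z'; split; [right|]; auto].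
    + split; [lra|]. split.
      * intros z' [<-|Hz'] Hlt; [lra|auto].
      * destruct H4 as [E|[z' [Hz' E]]]; [left; exact E|right; exists z'; split; [right|]; auto].
Qed.

Lemma next_cut_disjoint (Z : list X) z z' : In z' Z ->
  xval z' <= xval z \/ next_cut Z (xval z) <= xval z'.
Proof.
  intros Hz'. destruct (Rle_dec (xval z') (xval z)); [left; assumption|right].
  apply (proj1 (proj2 (next_cut_spec Z z))); [assumption|lra].
Qed.

Lemma gap_next_cut (Z : list X) (a x : X) : In a Z -> xval a < xval x < next_cut Z (xval a) ->
  forall y, gap Z x y <-> xval a < xval y < next_cut Z (xval a).
Proof.
  intros Ha Hx. destruct (next_cut_spec Z a) as [_ [_ Hnext]].
  apply gap_interval; [exact Hx| |exists a; auto|exact Hnext].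
  intros z Hz. destruct (next_cut_disjoint Z a z Hz); [left|right]; assumption.
Qed.

Lemma exists_max_below (l : list X) (w : X) : (exists z, In z l /\ xval z < xval w) ->
  exists a, In a l /\ xval a < xval w /\ forall z, In z l -> xval z < xval w -> xval z <= xval a.
Proof.
  induction l as [|b l IH]; intros [z [Hz Hzw]]; [destruct Hz|].
  destruct (classic (exists z, In z l /\ xval z < xval w)) as [E|N].
  - destruct (IH E) as [a [Ha [Haw Hmax]]].
    destruct (Rlt_dec (xval b) (xval w)) as [Hb|Hb]; [destruct (Rle_dec (xval b) (xval a))|].
    + exists a; split; [right; exact Ha|split; [exact Haw|]]. intros z' [<-|Hz'] Hlt; auto.
    + exists b; split; [left; reflexivity|split; [exact Hb|]].
      intros z' [<-|Hz'] Hlt; [lra|]. specialize (Hmax z' Hz' Hlt); lra.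
    + exists a; split; [right; exact Ha|split; [exact Haw|]]. intros z' [<-|Hz'] Hlt; [lra|auto].
  - destruct Hz as [<-|Hz]; [|exfalso; apply N; exists z; auto].
    exists b; split; [left; reflexivity|split; [exact Hzw|]].
    intros z' [<-|Hz'] Hlt; [lra|]. exfalso; apply N; exists z'; auto.
Qed.

Lemma gap_above_cut (Z : list X) (x : X) : In X0 Z -> ~ In x Z ->
  exists a, In a Z /\ forall y, gap Z x y <-> xval a < xval y < next_cut Z (xval a).
Proof.
  intros H0 Hx. assert (Hx0 : 0 < xval x) by (apply xval_pos; intros ->; contradiction).
  destruct (exists_max_below Z x) as [a [Ha [Hax Hmax]]]; [exists X0; split; [exact H0|simpl; lra]|].
  exists a; split; [exact Ha|]. apply gap_next_cut; [exact Ha|split; [exact Hax|]].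
  destruct (next_cut_spec Z a) as [[H1 H2] [_ [E|[z' [Hz' E]]]]]; [pose proof (xval_range x); lra|].
  rewrite <- E. destruct (Rlt_dec (xval z') (xval x)) as [Hl|Hl]; [specialize (Hmax z' Hz' Hl); lra|].
  destruct (Req_dec (xval z') (xval x)) as [E'|E']; [|lra].
  apply xval_inj in E' as ->; contradiction.
Qed.

Lemma between_cuts_range (Z : list X) (z : X) (c : R) : 0 < c < 1 ->
  0 <= xval z + c * (next_cut Z (xval z) - xval z) < 1.
Proof. intros Hc. pose proof (xval_range z). destruct (next_cut_spec Z z) as [[H1 H2] _]. split; nra. Qed.

Definition gap_sample (Z : list X) (z : X) : list X :=
  [z; mkX _ (between_cuts_range Z z (1/4) ltac:(lra)); mkX _ (between_cuts_range Z z (1/2) ltac:(lra));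
   mkX _ (between_cuts_range Z z (3/4) ltac:(lra))].

Lemma gap_sample_range Z z t : In t (gap_sample Z z) ->
  t = z \/ xval z < xval t < next_cut Z (xval z).
Proof.
  destruct (next_cut_spec Z z) as [[H1 H2] _].
  intros [<-|[<-|[<-|[<-|[]]]]]; [left; reflexivity|..]; right; simpl; nra.
Qed.

Lemma gap_sample_NoDup Z z : NoDup (gap_sample Z z).
Proof.
  destruct (next_cut_spec Z z) as [[H1 H2] _].
  repeat constructor; simpl; intros E; repeat destruct E as [E|E]; try contradiction;
    apply (f_equal xval) in E; simpl in E; nra.
Qed.

Lemma adapted_to_exists (Z : list X) : In X0 Z ->
  exists T, NoDup T /\ incl Z T /\ forall x, ~ In x Z -> gap_count Z x T = 3%nat.
Proof.
  intros H0. set (Zd := nodup X_eq_dec Z).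
  assert (HZd : forall z, In z Zd <-> In z Z) by (intros; apply nodup_In).
  assert (Hrange : forall z t, In z Z -> In t (gap_sample Z z) -> xval z <= xval t < next_cut Z (xval z)).
  { intros z t Hz Ht. destruct (next_cut_spec Z z) as [[H1 H2] _].
    destruct (gap_sample_range Z z t Ht) as [->|]; lra. }
  exists (flat_map (gap_sample Z) Zd). split; [|split].
  - apply NoDup_flat_map; [apply NoDup_nodup|intros; apply gap_sample_NoDup|].
    intros z z' t Hz Hz' Ht Ht'. apply HZd in Hz, Hz'.
    apply Hrange in Ht, Ht'; auto. apply xval_inj.
    destruct (next_cut_disjoint Z z z' Hz'), (next_cut_disjoint Z z' z Hz); lra.
  - intros z Hz. apply in_flat_map. exists z. split; [apply HZd; exact Hz|left; reflexivity].
  - intros x Hx. destruct (gap_above_cut Z x H0 Hx) as [a [Ha Hgap]].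
    unfold gap_count. rewrite count_flat_map, (list_sum_single _ Zd a); [| apply NoDup_nodup | apply HZd; exact Ha |].
    + pose proof (gap_sample_NoDup Z a) as ND. unfold gap_sample in ND |- *.
      apply NoDup_cons_iff in ND as [Ha' _].
      rewrite count_cons, count_true, (proj2 (asbool_false _)); [reflexivity| |].
      * rewrite Hgap; lra.
      * intros t Ht. apply asbool_true, Hgap.
        destruct (gap_sample_range Z a t (or_intror Ht)) as [->|]; [contradiction|assumption].
    + intros z Hz Hza. apply HZd in Hz. apply count_false. intros t Ht. apply asbool_false. rewrite Hgap.
      apply Hrange in Ht; [|exact Hz]. pose proof (xval_neq _ _ Hza).
      destruct (next_cut_disjoint Z z a Ha), (next_cut_disjoint Z a z Hz); lra.
Qed.

(** * The parity of inversions on adapted sets *)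

Section Parity.
Variables (f : X -> X) (W : list X).
Hypothesis f_inj : Injective f.
Hypothesis W_cut : cut_set f W.

Notation J := (inverted_pair f).

Lemma inverted_pair_count_drop_four p r1 r2 r3 r4 S :
  NoDup [r1; r2; r3; r4] -> (forall r, In r [r1; r2; r3; r4] -> gap W p r /\ ~ In r S) ->
  (count2 J ([r1; r2; r3; r4] ++ S) ([r1; r2; r3; r4] ++ S) mod 4 = count2 J S S mod 4)%nat.
Proof.
  set (R := [r1; r2; r3; r4]). intros HRnd HR.
  assert (Hcell : forall r r', In r R -> In r' R -> cell W r r').
  { intros r r' Hr Hr'. right. split; [exact (gap_notin _ _ _ (proj1 (HR r Hr)))|].
    apply (gap_common W p); apply HR; assumption. }
  assert (Hr12 : xval r1 <> xval r2).
  { apply xval_neq. intros E. apply NoDup_cons_iff in HRnd as [H _]. apply H; left; symmetry; exact E. }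
  assert (RS : count2 J R S = (4 * count (J r1) S)%nat).
  { apply count2_const_l. intros r Hr. apply count_ext_in. intros y Hy.
    apply (inverted_pair_cell f W f_inj W_cut); [apply Hcell; auto; left; reflexivity|apply cell_refl|..];
      apply xval_neq; intros E; subst y;
      first [exact (proj2 (HR r Hr) Hy) | exact (proj2 (HR r1 (or_introl eq_refl)) Hy)]. }
  assert (SR : count2 J S R = count2 J R S).
  { rewrite count2_swap. apply count2_ext_in; intros; apply inverted_pair_sym. }
  assert (RR : count2 J R R = (4 * (3 * Nat.b2n (J r1 r2)))%nat).
  { apply count2_const_l. intros r Hr.
    rewrite (count_ext_in _ (fun y => J r1 r2 && negb (asbool (y = r)))).
    - destruct (J r1 r2); simpl; [rewrite count_neq_one; auto|apply count_false; auto].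
    - intros y Hy. destruct (X_eq_dec y r) as [->|Nyr].
      + rewrite inverted_pair_irrefl, (proj2 (asbool_true _) eq_refl), Bool.andb_false_r; reflexivity.
      + rewrite (proj2 (asbool_false _) Nyr), Bool.andb_true_r.
        apply (inverted_pair_cell f W f_inj W_cut); [apply Hcell; simpl; auto..| |exact Hr12].
        apply xval_neq; congruence. }
  rewrite count2_app_l, !count2_app_r, SR, RS, RR.
  replace (4 * (3 * Nat.b2n (J r1 r2)) + 4 * count (J r1) S + (4 * count (J r1) S + count2 J S S))%nat
    with (count2 J S S + (3 * Nat.b2n (J r1 r2) + 2 * count (J r1) S) * 4)%nat by lia.
  apply Nat.Div0.mod_add.
Qed.

Lemma adapted_to_shrink S x : adapted_to W S -> ~ In x W -> gap_count W x S <> 3%nat ->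
  exists S1, (length S1 < length S)%nat /\ adapted_to W S1 /\ (count2 J S1 S1 mod 4 = count2 J S S mod 4)%nat.
Proof.
  intros [HS [HWS Hc]] Hx Hne.
  assert (H7 : (7 <= gap_count W x S)%nat).
  { specialize (Hc x Hx). pose proof (Nat.div_mod_eq (gap_count W x S) 4). lia. }
  assert (HF : NoDup (filter (fun y => asbool (gap W x y)) S)) by (apply NoDup_filter, HS).
  assert (HFin : forall r, In r (filter (fun y => asbool (gap W x y)) S) -> In r S /\ gap W x r).
  { intros r Hr. apply filter_In in Hr as [Hr Hg]. rewrite asbool_true in Hg. split; assumption. }
  unfold gap_count, count in H7.
  destruct (filter (fun y => asbool (gap W x y)) S) as [|r1 [|r2 [|r3 [|r4 rest]]]]; simpl in H7; try lia.
  set (R := [r1; r2; r3; r4]).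
  assert (HR : NoDup R) by exact (NoDup_app_remove_r R rest HF).
  assert (HRS : forall r, In r R -> In r S /\ gap W x r) by (intros r Hr; apply HFin; simpl in *; tauto).
  set (S1 := filter (fun y => negb (asbool (In y R))) S).
  assert (PS : Permutation S (R ++ S1)) by (apply Permutation_extract; auto; intros r Hr; apply HRS, Hr).
  assert (HRS1 : forall r, In r R -> gap W x r /\ ~ In r S1).
  { intros r Hr. split; [apply HRS, Hr|]. intros Hr1. apply filter_In in Hr1 as [_ Hr1].
    rewrite (proj2 (asbool_true _) Hr) in Hr1. discriminate. }
  exists S1. split; [|split; [split; [|split]|]].
  - apply Permutation_length in PS. rewrite length_app in PS. simpl in PS. lia.
  - apply NoDup_filter, HS.
  - intros w Hw. apply filter_In. split; [apply HWS, Hw|].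
    apply Bool.negb_true_iff, asbool_false. intros Hr. exact (gap_notin _ _ _ (proj1 (HRS1 w Hr)) Hw).
  - intros y Hy. specialize (Hc y Hy). unfold gap_count in Hc |- *.
    rewrite (count_perm _ _ _ PS), count_app in Hc.
    destruct (classic (gap W y x)) as [Cyx|Nyx].
    + rewrite count_true in Hc by (intros r Hr; apply asbool_true, (gap_trans W y x r); [exact Cyx|apply HRS, Hr]).
      simpl length in Hc. rewrite Nat.add_comm in Hc.
      replace (_ + 4)%nat with (count (fun z => asbool (gap W y z)) S1 + 1 * 4)%nat in Hc by lia.
      rewrite Nat.Div0.mod_add in Hc. exact Hc.
    + rewrite count_false in Hc; [exact Hc|]. intros r Hr. apply asbool_false. intros Cyr. apply Nyx.
      apply (gap_trans W y r x); [exact Cyr|apply gap_sym; [exact Hx|apply HRS, Hr]].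
  - rewrite (count2_perm _ _ _ _ _ PS PS). symmetry. apply (inverted_pair_count_drop_four x); auto.
Qed.

Lemma adapted_to_exact S : adapted_to W S -> exists S0, adapted_to W S0 /\
  (forall x, ~ In x W -> gap_count W x S0 = 3%nat) /\ (count2 J S0 S0 mod 4 = count2 J S S mod 4)%nat.
Proof.
  remember (length S) as n eqn:En. revert S En.
  induction n as [n IH] using (well_founded_induction Wf_nat.lt_wf). intros S -> HS.
  destruct (classic (exists x, ~ In x W /\ gap_count W x S <> 3%nat)) as [[x [Hx Hne]]|N].
  - destruct (adapted_to_shrink S x HS Hx Hne) as [S1 [Hlen [HS1 E1]]].
    destruct (IH _ Hlen S1 eq_refl HS1) as [S0 [HS0 [C0 E0]]].
    exists S0. rewrite E0, E1. auto.
  - exists S. split; [exact HS|split; [|reflexivity]].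
    intros x Hx. apply NNPP. intros C. apply N. exists x; auto.
Qed.

Lemma cell_count_exact S S' : NoDup S -> NoDup S' -> incl W S -> incl W S' ->
  (forall x, ~ In x W -> gap_count W x S = 3%nat) -> (forall x, ~ In x W -> gap_count W x S' = 3%nat) ->
  forall x, count (fun y => asbool (cell W x y)) S = count (fun y => asbool (cell W x y)) S'.
Proof.
  intros HS HS' HWS HWS' C C' x. destruct (classic (In x W)) as [Hx|Hx].
  - assert (E : forall l, count (fun y => asbool (cell W x y)) l = count (fun y => asbool (y = x)) l).
    { intros l. apply count_ext_in. intros y _. apply asbool_iff.
      split; [intros [<-|[C0 _]]; [reflexivity|contradiction]|intros ->; apply cell_refl]. }
    rewrite !E, !count_eq_one by auto. reflexivity.
  - assert (E : forall l, count (fun y => asbool (cell W x y)) l = gap_count W x l).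
    { intros l. apply count_ext_in. intros y _. apply asbool_iff, cell_gap, Hx. }
    rewrite !E, C, C'; auto.
Qed.

Lemma count2_inverted_pair_cell_bijection (phi : X -> X) S S' : NoDup S' ->
  Permutation (map phi S) S' -> (forall x, In x S -> cell W x (phi x)) -> count2 J S S = count2 J S' S'.
Proof.
  intros HS' Hp Hphi. rewrite <- (count2_perm _ _ _ _ _ Hp Hp), count2_map.
  apply count2_ext_in. intros x y Hx Hy. destruct (X_eq_dec x y) as [<-|Nxy]; [rewrite !inverted_pair_irrefl; reflexivity|].
  apply (inverted_pair_cell f W f_inj W_cut); auto; apply xval_neq; [exact Nxy|].
  intros E. apply Nxy. apply Permutation_sym, Permutation_NoDup in Hp; [|exact HS'].
  clear -Hp Hx Hy E. induction S as [|a S IH]; [destruct Hx|]. simpl in Hp. apply NoDup_cons_iff in Hp as [Ha Hp].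
  destruct Hx as [<-|Hx], Hy as [<-|Hy]; auto.
  - exfalso; apply Ha; rewrite E; apply in_map; exact Hy.
  - exfalso; apply Ha; rewrite <- E; apply in_map; exact Hx.
Qed.

Lemma inversions_parity_adapted S S' : adapted_to W S -> adapted_to W S' ->
  Nat.odd (inversions f S) = Nat.odd (inversions f S').
Proof.
  intros HS HS'. apply odd_of_double_mod4. rewrite <- !count2_inverted_pair.
  destruct (adapted_to_exact S HS) as [S0 [[N0 [I0 _]] [C0 E0]]].
  destruct (adapted_to_exact S' HS') as [S0' [[N0' [I0' _]] [C0' E0']]].
  rewrite <- E0, <- E0'. f_equal.
  destruct (matching_of_class_counts (fun x y => asbool (cell W x y))) with (S := S0) (S' := S0')
    as [phi [Hp Hphi]]; auto.
  - intros x; apply asbool_true, cell_refl.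
  - intros x y; apply asbool_iff; split; apply cell_sym.
  - intros x y z H1 H2; rewrite asbool_true in H1, H2 |- *; eapply cell_trans; eauto.
  - apply cell_count_exact; auto.
  - apply (count2_inverted_pair_cell_bijection phi); auto. intros x Hx; apply asbool_true, Hphi, Hx.
Qed.

End Parity.

(** * Inversions of composites and of finitely supported permutations *)

Lemma count2_ltX_half (Q : X -> X -> bool) S : (forall x y, Q x y = Q y x) -> (forall x, Q x x = false) ->
  count2 Q S S = (2 * count2 (fun x y => ltX x y && Q x y) S S)%nat.
Proof.
  intros Qsym Qirr. rewrite (count2_split Q (fun x y => ltX x y)).
  rewrite (count2_ext_in (fun x y => Q x y && ltX x y) (fun x y => ltX x y && Q x y))
    by (intros; apply Bool.andb_comm).
  rewrite (count2_ext_in (fun x y => Q x y && negb (ltX x y)) (fun x y => ltX y x && Q y x)).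
  - rewrite (count2_swap (fun x y => ltX y x && Q y x)). lia.
  - intros x y _ _. destruct (X_eq_dec x y) as [<-|N]; [rewrite Qirr, ltX_irrefl; reflexivity|].
    rewrite (ltX_asym x y (xval_neq _ _ N)), Qsym. btauto.
Qed.

Lemma inversions_map f g S : inversions f (map g S) =
  count2 (fun x y => ltX x y && inverted_pair f (g x) (g y)) S S.
Proof.
  apply (Nat.mul_cancel_l _ _ 2); [lia|]. rewrite <- count2_inverted_pair, count2_map.
  apply count2_ltX_half; intros; [apply inverted_pair_sym|apply inverted_pair_irrefl].
Qed.

Lemma inverted_comp f g x y : Injective f -> Injective g ->
  inverted (fun x => f (g x)) x y = xorb (inverted g x y) (ltX x y && inverted_pair f (g x) (g y)).
Proof.
  intros Hf Hg. unfold inverted_pair, inverted.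
  destruct (X_eq_dec x y) as [<-|N]; [rewrite ltX_irrefl; reflexivity|].
  pose proof (injective_xval_neq g x y Hg (xval_neq _ _ N)) as Ng.
  rewrite (ltX_asym (g x) (g y) Ng), (ltX_asym (f (g x)) (f (g y)) (injective_xval_neq f _ _ Hf Ng)).
  btauto.
Qed.

Lemma inversions_comp_odd f g S : Injective f -> Injective g ->
  Nat.odd (inversions (fun x => f (g x)) S) = xorb (Nat.odd (inversions g S)) (Nat.odd (inversions f (map g S))).
Proof.
  intros Hf Hg. rewrite inversions_map, !inversions_count2, <- count2_xorb_odd.
  f_equal. apply count2_ext_in; intros x y _ _. apply inverted_comp; assumption.
Qed.

(* A fixed point [z] added to an [f]-stable set [L] creates as many inversions [(x, z)] with [x]
   below [z] as inversions [(z, x)] with [x] above [z], since [f] permutes [L]. *)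
Lemma inversions_cons_fixed_odd f z L : Injective f -> NoDup L -> ~ In z L -> f z = z ->
  (forall x, In x L -> In (f x) L) -> Nat.odd (inversions f (z :: L)) = Nat.odd (inversions f L).
Proof.
  intros Hf HL Hz Hfz HLf. rewrite !inversions_count2, count2_cons_l, count_cons, count2_cons_r.
  unfold inverted at 1; rewrite ltX_irrefl; simpl Nat.b2n.
  assert (NxL : forall x, In x L -> xval x <> xval z) by (intros x Hx; apply xval_neq; intros ->; contradiction).
  assert (NfL : forall x, In x L -> xval (f x) <> xval z)
    by (intros x Hx; rewrite <- Hfz; apply (injective_xval_neq f _ _ Hf), NxL, Hx).
  assert (Below : count (fun x => ltX x z) L = count (fun x => ltX (f x) z) L).
  { rewrite <- (count_map (fun y => ltX y z) f L). symmetry; apply count_perm.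
    apply Permutation_map_same_l; [apply Injective_map_NoDup; assumption|].
    intros y Hy; apply in_map_iff in Hy as [x [<- Hx]]; auto. }
  rewrite (count_split _ (fun x => ltX (f x) z)), (count_split (fun x => ltX (f x) z) (fun x => ltX x z)) in Below.
  rewrite (count_ext_in _ (fun x => ltX (f x) z && negb (ltX x z)) L), (count_ext_in (fun x => inverted f x z) (fun x => ltX x z && negb (ltX (f x) z)) L).
  - replace (count (fun x => ltX (f x) z && ltX x z) L) with (count (fun x => ltX x z && ltX (f x) z) L) in Below
      by (apply count_ext_in; intros; apply Bool.andb_comm).
    replace (_ + _ + _)%nat with (count2 (inverted f) L L + 2 * count (fun x => ltX x z && negb (ltX (f x) z)) L)%nat by lia.
    apply Nat.odd_add_mul_2.
  - intros x Hx. unfold inverted. rewrite Hfz, (ltX_asym (f x) z (NfL x Hx)). btauto.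
  - intros x Hx. unfold inverted. rewrite Hfz, (ltX_asym x z (NxL x Hx)). btauto.
Qed.

Lemma inversions_app_fixed_odd f s R : Injective f -> NoDup (s ++ R) ->
  (forall x, In x s -> In (f x) s) -> (forall x, In x R -> f x = x) ->
  Nat.odd (inversions f (s ++ R)) = Nat.odd (inversions f s).
Proof.
  intros Hf. induction R as [|r R IH]; intros HsR Hs HR; [rewrite app_nil_r; reflexivity|].
  assert (Hmid : Permutation (s ++ r :: R) (r :: s ++ R)) by (symmetry; apply Permutation_middle).
  rewrite !inversions_count2, (count2_perm _ _ _ _ _ Hmid Hmid), <- !inversions_count2.
  rewrite inversions_cons_fixed_odd; auto.
  - apply IH; [eapply NoDup_remove_1; eauto|exact Hs|intros x Hx; apply HR; right; exact Hx].
  - eapply NoDup_remove_1; eauto.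
  - eapply NoDup_remove_2; eauto.
  - apply HR; left; reflexivity.
  - intros x Hx. apply in_app_iff in Hx as [Hx|Hx]; apply in_app_iff; [left; auto|right].
    rewrite HR; [exact Hx|right; exact Hx].
Qed.

Lemma cut_set_incl f Z Z' : cut_set f Z -> incl Z Z' -> cut_set f Z'.
Proof. intros [H0 Hc] H. split; [apply H, H0|]. intros x Hx; apply Hc; intros Hin; apply Hx, H, Hin. Qed.

Lemma cut_set_inter f Z Z' : cut_set f Z -> cut_set f Z' -> cut_set f (filter (fun z => asbool (In z Z')) Z).
Proof.
  intros [H0 Hc] [H0' Hc']. split; [apply filter_In; split; [exact H0|apply asbool_true, H0']|].
  intros x Hx. destruct (classic (In x Z)) as [HZ|HZ]; [|apply Hc, HZ].
  apply Hc'. intros HZ'. apply Hx, filter_In. split; [exact HZ|apply asbool_true, HZ'].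
Qed.

Lemma continuous_at_X_comp f g x : continuous_at_X g x -> continuous_at_X f (g x) ->
  continuous_at_X (fun y => f (g y)) x.
Proof.
  intros Hg Hf e He. destruct (Hf e He) as [d1 [Hd1 H1]]. destruct (Hg d1 Hd1) as [d2 [Hd2 H2]].
  exists d2; split; auto.
Qed.

Lemma cut_set_comp f g gi Zf Zg : (forall x, gi (g x) = x) -> cut_set f Zf -> cut_set g Zg ->
  cut_set (fun x => f (g x)) (Zg ++ map gi Zf).
Proof.
  intros gi_g [_ Hf] [H0 Hg]. split; [apply in_or_app; left; exact H0|].
  intros x Hx. rewrite in_app_iff in Hx. apply continuous_at_X_comp; [apply Hg; tauto|].
  apply Hf. intros Hin. apply Hx. right. rewrite <- (gi_g x). apply in_map, Hin.
Qed.

Lemma adapted_to_coarsen Z0 Z S : In X0 Z0 -> incl Z0 Z -> adapted_to Z S -> adapted_to Z0 S.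
Proof.
  intros H0 HZ0 [HS [HZS HZ]]. split; [exact HS|split].
  - intros z Hz; apply HZS, HZ0, Hz.
  - apply (gap_count_mod4_coarsen Z0 Z); auto.
Qed.

Definition adapted (f : X -> X) (S : list X) : Prop := exists Z, cut_set f Z /\ adapted_to Z S.

Lemma adapted_inversions_odd f S S' : Injective f -> adapted f S -> adapted f S' ->
  Nat.odd (inversions f S) = Nat.odd (inversions f S').
Proof.
  intros Hf [Z [HZ HS]] [Z' [HZ' HS']].
  pose proof (cut_set_inter f Z Z' HZ HZ') as HW.
  assert (HWZ : incl (filter (fun z => asbool (In z Z')) Z) Z) by (intros z Hz; apply filter_In in Hz; tauto).
  assert (HWZ' : incl (filter (fun z => asbool (In z Z')) Z) Z')
    by (intros z Hz; apply filter_In in Hz as [_ Hz]; apply asbool_true, Hz).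
  apply (inversions_parity_adapted f _ Hf HW);
    [apply (adapted_to_coarsen _ Z)|apply (adapted_to_coarsen _ Z')]; auto; apply HW.
Qed.

Definition signature (f : X -> X) : bool := asbool (exists S, adapted f S /\ Nat.odd (inversions f S) = true).

Lemma signature_adapted f S : Injective f -> adapted f S -> signature f = Nat.odd (inversions f S).
Proof.
  intros Hf HS. unfold signature. destruct (Nat.odd (inversions f S)) eqn:E.
  - apply asbool_true. exists S; auto.
  - apply asbool_false. intros [S' [HS' E']]. rewrite (adapted_inversions_odd f S S' Hf HS HS') in E; congruence.
Qed.

Lemma gap_count_map g gi Z x T : (forall x, gi (g x) = x) -> (forall y, g (gi y) = y) -> cut_set g Z ->
  ~ In x Z -> gap_count Z x (map gi T) = gap_count (map g Z) (g x) T.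
Proof.
  intros gi_g g_gi HZ Hx. unfold gap_count. rewrite count_map. apply count_ext_in; intros t _.
  apply asbool_iff. rewrite (gap_map g gi Z gi_g g_gi HZ x (gi t) Hx), g_gi. reflexivity.
Qed.

Lemma adapted_comp f g gi Zf Zg : (forall x, gi (g x) = x) -> (forall y, g (gi y) = y) ->
  cut_set f Zf -> cut_set g Zg ->
  exists S, adapted g S /\ adapted (fun x => f (g x)) S /\ adapted f (map g S).
Proof.
  intros gi_g g_gi Hf Hg. set (Zd := Zg ++ map gi Zf).
  assert (Hgd : cut_set g Zd) by (apply (cut_set_incl g Zg _ Hg); intros z Hz; apply in_or_app; left; exact Hz).
  assert (Hfd : cut_set f (map g Zd)).
  { apply (cut_set_incl f Zf _ Hf). intros y Hy. rewrite <- (g_gi y). apply in_map, in_or_app; right; apply in_map, Hy. }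
  destruct (adapted_to_exists (map g Zd) (proj1 Hfd)) as [T [HT [HZT HcT]]].
  assert (HS : adapted_to Zd (map gi T)).
  { split; [|split].
    - apply Injective_map_NoDup; [|exact HT]. intros a b E. rewrite <- (g_gi a), <- (g_gi b), E; reflexivity.
    - intros z Hz. rewrite <- (gi_g z). apply in_map, HZT, in_map, Hz.
    - intros x Hx. rewrite (gap_count_map g gi Zd x T gi_g g_gi Hgd Hx), HcT; [reflexivity|].
      rewrite (in_map_injective g Zd x (left_inverse_injective g gi gi_g)). exact Hx. }
  exists (map gi T). rewrite map_map, (map_ext (fun y => g (gi y)) (fun y => y) g_gi), map_id.
  split; [exists Zd; auto|split; [exists Zd; split; [apply cut_set_comp; auto|exact HS]|]].
  exists (map g Zd). split; [exact Hfd|split; [exact HT|split; [exact HZT|intros y Hy; rewrite HcT; auto]]].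
Qed.

Lemma PC_hat_cut_set f : PC_hat f -> exists Z, cut_set f Z.
Proof.
  intros [_ [F HF]]. exists (X0 :: F). split; [left; reflexivity|].
  intros x Hx; apply HF; intros Hin; apply Hx; right; exact Hin.
Qed.

Lemma signature_comp f g : PC_hat f -> PC_hat g ->
  signature (fun x => f (g x)) = xorb (signature f) (signature g).
Proof.
  intros Hf Hg. destruct (PC_hat_cut_set f Hf) as [Zf HZf], (PC_hat_cut_set g Hg) as [Zg HZg].
  destruct Hf as [[fi [fi_f _]] _], Hg as [[gi [gi_g g_gi]] _].
  pose proof (left_inverse_injective f fi fi_f) as f_inj. pose proof (left_inverse_injective g gi gi_g) as g_inj.
  destruct (adapted_comp f g gi Zf Zg gi_g g_gi HZf HZg) as [S [HSg [HSfg HSf]]].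
  rewrite (signature_adapted _ S), (signature_adapted g S), (signature_adapted f (map g S)); auto.
  - rewrite inversions_comp_odd by assumption. apply Bool.xorb_comm.
  - intros x y E. apply g_inj, f_inj, E.
Qed.

Lemma cut_set_of_fixed f s0 : (forall x, ~ In x s0 -> f x = x) -> cut_set f (X0 :: s0).
Proof.
  intros Fix. split; [left; reflexivity|]. intros x Hx.
  assert (Hx' : ~ In x s0) by (intros Hin; apply Hx; right; exact Hin).
  destruct (pos_dist_to_list s0 x Hx') as [eta [Heta Hd]].
  intros e He. exists (Rmin e eta). split; [apply Rmin_pos; assumption|].
  intros y Hy. assert (Hy' : ~ In y s0) by (intros Hin; specialize (Hd y Hin); pose proof (Rmin_r e eta); lra).
  rewrite (Fix y Hy'), (Fix x Hx'). pose proof (Rmin_l e eta). lra.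
Qed.

Lemma support_list (f : X -> X) (s0 : list X) : (forall x, f x <> x -> In x s0) ->
  exists s, NoDup s /\ forall x, f x <> x <-> In x s.
Proof.
  intros Hs0. exists (filter (fun x => asbool (f x <> x)) (nodup X_eq_dec s0)).
  split; [apply NoDup_filter, NoDup_nodup|]. intros x. rewrite filter_In, nodup_In, asbool_true. intuition.
Qed.

Lemma signature_fin f : fin_supp_perm f -> fin_signature f (signature f).
Proof.
  intros [[fi [fi_f _]] [s0 Hs0]]. pose proof (left_inverse_injective f fi fi_f) as f_inj.
  assert (Fix : forall x, ~ In x s0 -> f x = x) by (intros x Hx; apply NNPP; intros C; apply Hx, Hs0, C).
  pose proof (cut_set_of_fixed f s0 Fix) as HZ.
  destruct (adapted_to_exists (X0 :: s0) (proj1 HZ)) as [T [HT [HZT HcT]]].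
  rewrite (signature_adapted f T f_inj)
    by (exists (X0 :: s0); split; [exact HZ|split; [exact HT|split; [exact HZT|intros x Hx; rewrite HcT; auto]]]).
  destruct (support_list f s0 Hs0) as [s [Hs Ms]].
  exists s. split; [exact Hs|split; [exact Ms|]].
  assert (PT : Permutation T (s ++ filter (fun y => negb (asbool (In y s))) T)).
  { apply Permutation_extract; auto. intros x Hx. apply HZT; right; apply Hs0, Ms, Hx. }
  rewrite inversions_count2, (count2_perm _ _ _ _ _ PT PT), <- inversions_count2.
  apply inversions_app_fixed_odd; auto.
  - apply (Permutation_NoDup PT HT).
  - intros x Hx. apply Ms in Hx. apply Ms. intros E. apply Hx, f_inj, E.
  - intros x Hx. apply filter_In in Hx as [_ Hx]. apply Bool.negb_true_iff, asbool_false in Hx.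
    apply NNPP; intros C; apply Hx, Ms, C.
Qed.

Theorem theorem1p1 :
  exists eps : (X -> X) -> bool,
    (forall f g : X -> X, PC_hat f -> PC_hat g ->
       eps (fun x => f (g x)) = xorb (eps f) (eps g)) /\
    (forall f : X -> X, fin_supp_perm f -> fin_signature f (eps f)).
Proof.
  exists signature. split; [exact signature_comp|exact signature_fin].
Qed.
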